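(* For relatively prime integers $r, s$ put $u = r^2 + s^2$, $v = 2r^2 - s^2$, $A = uv(u^2-v^2)$, and $\mathcal{S} = \{\pm u(u+v),\ \pm u(u-v),\ \pm v(u+v),\ \pm v(u-v)\}$. Then for all but finitely many pairs $(r,s)$ of relatively prime integers with $r\neq 0$, no element of $\mathcal{S}$ represents the same class in $\mathbb{Q}^\times/(\mathbb{Q}^\times)^2$ as any of $1, -1, A, -A$.
   Context: $\mathbb{Q}^\times/(\mathbb{Q}^\times)^2$ denotes the group of nonzero rationals modulo nonzero squares; two nonzero rationals represent the same class iff their quotient is a square of a rational. *)

From mathcomp Require Import all_boot all_order all_algebra.
Set Implicit Arguments. Unset Strict Implicit. Unset Printing Implicit Defensive.
Import Order.TTheory GRing.Theory Num.Theory.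
Local Open Scope ring_scope.

(* Two nonzero rationals represent the same class in Q^x/(Q^x)^2
   iff their quotient is a square of a rational. *)
Definition same_sq_class (a b : rat) : Prop :=
  a != 0 /\ b != 0 /\ exists q : rat, a / b = q ^+ 2.

Definition u_of (r s : int) : int := r ^+ 2 + s ^+ 2.
Definition v_of (r s : int) : int := 2 * r ^+ 2 - s ^+ 2.
Definition A_of (r s : int) : int :=
  u_of r s * v_of r s * (u_of r s ^+ 2 - v_of r s ^+ 2).

Definition S_of (r s : int) : seq int :=
  let u := u_of r s in let v := v_of r s in
  [:: u * (u + v); - (u * (u + v)); u * (u - v); - (u * (u - v));
      v * (u + v); - (v * (u + v)); v * (u - v); - (v * (u - v))].

Definition T_of (r s : int) : seq int := [:: 1; -1; A_of r s; - A_of r s].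

Definition exceptional (r s : int) : Prop :=
  exists2 x, x \in S_of r s & exists2 y, y \in T_of r s &
    same_sq_class (x%:~R) (y%:~R).

From mathcomp Require Import all_boot all_order all_algebra.
From mathcomp Require Import zify ring.
Import Order.TTheory GRing.Theory Num.Theory.
Set Implicit Arguments. Unset Strict Implicit. Unset Printing Implicit Defensive.
Local Open Scope ring_scope.

(* Since u + v = 3 r^2, u - v = w := 2 s^2 - r^2 (v with r and s exchanged) and
   A = u v (u + v) (u - v), such a coincidence forces one of +-3u, +-3v, +-uw,
   +-vw to be a square ([square_class_reduction]):
   - +-3u and +-3v are not squares, as 3 divides neither u nor v;
   - u and w are coprime and u > 0, so u = a^2 and w = +-b^2.  The sign + fails
     modulo 3, and the sign - makes r^2 + s^2 and r^2 - 2 s^2 both squares,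
     which by a first infinite descent forces s = 0 ([sum_diff2_sqr]);
   - v and w are coprime, so v = +-a^2 and w = +-b^2.  Mixed signs fail modulo 3,
     two minus signs contradict v + w = u > 0, and two plus signs force r^2 = s^2
     by a second descent, which passes through the quartic
     x^4 - x^2 y^2 + y^4 = z^2 ([double_diff_sqr]).
   So only the six pairs with s = 0 or r^2 = s^2 are exceptional. *)

Lemma even_or_odd (a : int) : exists q, a = 2 * q \/ a = 2 * q + 1.
Proof.
exists (a %/ 2)%Z; have := divz_eq a 2.
have := modz_ge0 a (isT : (2 : int) != 0); have := ltz_pmod a (isT : (0 : int) < 2).
lia.
Qed.

Lemma mod3_cases (a : int) : exists q, a = 3 * q \/ a = 3 * q + 1 \/ a = 3 * q + 2.
Proof.
exists (a %/ 3)%Z; have := divz_eq a 3.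
have := modz_ge0 a (isT : (3 : int) != 0); have := ltz_pmod a (isT : (0 : int) < 3).
lia.
Qed.

Lemma odd_sqr (a k : int) : a = 2 * k + 1 -> exists t, a ^+ 2 = 8 * t + 1.
Proof.
move=> ->; have [q [->|->]] := even_or_odd k.
  by exists (q * (2 * q + 1)); ring.
by exists ((q + 1) * (2 * q + 1)); ring.
Qed.

Lemma coprimez_dvd_unit (a b g : int) :
  coprimez a b -> (g %| a)%Z -> (g %| b)%Z -> `|g|%N = 1%N.
Proof.
move=> /eqP cab ga gb.
have : (g %| gcdz a b)%Z by rewrite dvdz_gcd ga gb.
by rewrite cab dvdzE /= dvdn1 => /eqP.
Qed.

Lemma coprimez_by_dvd (a b : int) :
  (forall g : int, (g %| a)%Z -> (g %| b)%Z -> `|g|%N = 1%N) -> coprimez a b.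
Proof.
move=> h; apply/eqP; have := h _ (dvdz_gcdl a b) (dvdz_gcdr a b).
by rewrite /gcdz /= => ->.
Qed.

Lemma coprimez_dvd (a b c d : int) :
  coprimez a b -> (c %| a)%Z -> (d %| b)%Z -> coprimez c d.
Proof. by move=> cab ca db; apply: (coprimez_dvdr db); apply: (coprimez_dvdl ca). Qed.

Lemma coprimez_common_factor (a b d j k : int) :
  coprimez a b -> a = d * j -> b = d * k -> `|d|%N = 1%N.
Proof. by move=> cab ea eb; apply: (coprimez_dvd_unit cab); rewrite (ea, eb) dvdz_mulr. Qed.

Lemma coprimez_odd (a k : int) : a = 2 * k + 1 -> coprimez a 2.
Proof. by move=> ->; apply/coprimezP; exists (1, - k) => /=; ring. Qed.

Lemma sqr_eq_cases (a b : int) : a ^+ 2 = b ^+ 2 -> a = b \/ a = - b.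
Proof. by move/eqP; rewrite eqf_sqr => /orP[] /eqP; [left | right]. Qed.

Lemma sqr_unit (e : int) : `|e|%N = 1%N -> e ^+ 2 = 1.
Proof. by move=> h; have [->|->] : e = 1 \/ e = -1 by lia. Qed.

Lemma sqr_nonneg_root (z : int) : exists2 z0, 0 <= z0 & z ^+ 2 = z0 ^+ 2.
Proof. by exists `|z|; rewrite // real_normK ?num_real. Qed.

Lemma abs_lt_of_sqr_lt (x y : int) : x ^+ 2 < y ^+ 2 -> (`|x| < `|y|)%N.
Proof. by move=> h; rewrite -ltz_nat !abszE -ltr_sqr ?nnegrE // !real_normK ?num_real. Qed.

Lemma gcdn_sqr (m n : nat) : (gcdn (m ^ 2) (n ^ 2) = gcdn m n ^ 2)%N.
Proof.
have [d0|dpos] := posnP (gcdn m n).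
  have : (0 < gcdn m n)%N = false by rewrite d0.
  by rewrite gcdn_gt0 => /norP[]; rewrite !lt0n !negbK => /eqP-> /eqP->.
set d := gcdn m n in dpos *.
have em : m = (m %/ d * d)%N by rewrite divnK // dvdn_gcdl.
have en : n = (n %/ d * d)%N by rewrite divnK // dvdn_gcdr.
have : coprime (m %/ d) (n %/ d).
  by rewrite /coprime -(eqn_pmul2r dpos) mul1n muln_gcdl -em -en.
rewrite -(@coprime_pexpl 2) // -(@coprime_pexpr 2) // => /eqP c2.
by rewrite {1}em {1}en !expnMn -muln_gcdl c2 mul1n.
Qed.

Lemma coprime_mul_sqrn (a b c : nat) :
  coprime a b -> (a * b = c ^ 2)%N -> (a = gcdn a c ^ 2)%N.
Proof.
move=> cab e; rewrite -gcdn_sqr -e.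
by rewrite [(a ^ 2)%N]expnS expn1 -muln_gcdr (eqP cab) muln1.
Qed.

Lemma coprimez_mul_sqr (a b c : int) :
  coprimez a b -> 0 <= a -> 0 <= b -> a * b = c ^+ 2 ->
  exists x y : int, [/\ 0 <= x, 0 <= y, a = x ^+ 2 & b = y ^+ 2].
Proof.
have root (m n : int) :
    coprimez m n -> 0 <= m -> m * n = c ^+ 2 -> exists2 x : int, 0 <= x & m = x ^+ 2.
  move=> cmn m0 e; exists (gcdn `|m| `|c|)%:Z => //.
  have e' : (`|m| * `|n| = `|c| ^ 2)%N by rewrite -abszM e abszX.
  by rewrite -[LHS]gez0_abs // {1}(coprime_mul_sqrn cmn e') -!natz natrX.
move=> cab a0 b0 e; have [x x0 ->] := root a b cab a0 e.
have [y y0 ->] : exists2 y : int, 0 <= y & b = y ^+ 2.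
  by apply: (root b a); rewrite 1?coprimez_sym // mulrC.
by exists x, y.
Qed.

Lemma coprimez_mul_fourth (k l m : int) :
  0 <= k -> 0 <= l -> coprimez k l -> k * l = m ^+ 4 ->
  exists x y : int, [/\ k = x ^+ 4, l = y ^+ 4, m ^+ 2 = x ^+ 2 * y ^+ 2 & coprimez x y].
Proof.
move=> k0 l0 ckl e.
have e2 : k * l = (m ^+ 2) ^+ 2 by rewrite -exprM.
have [K [L [K0 L0 eK eL]]] := coprimez_mul_sqr ckl k0 l0 e2.
have cKL : coprimez K L.
  by move: ckl; rewrite eK eL coprimez_pexpl // coprimez_pexpr.
have eKL : K * L = m ^+ 2.
  have : (K * L) ^+ 2 = (m ^+ 2) ^+ 2 by rewrite exprMn -eK -eL.
  case/sqr_eq_cases => // h.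
  have := mulr_ge0 K0 L0; have := sqr_ge0 m; rewrite h; lia.
have [x [y [_ _ eKx eLy]]] := coprimez_mul_sqr cKL K0 L0 eKL.
exists x, y; split.
- by rewrite eK eKx -exprM.
- by rewrite eL eLy -exprM.
- by rewrite -eKL eKx eLy.
- by move: cKL; rewrite eKx eLy coprimez_pexpl // coprimez_pexpr.
Qed.

Lemma coprimez_mul_3fourth (g h p : int) :
  0 < g -> 0 < h -> coprimez g h -> g * h = 3 * p ^+ 4 ->
  exists x y : int, [/\ coprimez x y, p ^+ 2 = x ^+ 2 * y ^+ 2 &
    (g = 3 * x ^+ 4 /\ h = y ^+ 4) \/ (g = y ^+ 4 /\ h = 3 * x ^+ 4)].
Proof.
move=> g0 h0 cgh e.
have : (3 %| g * h)%Z by rewrite e dvdz_mulr.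
rewrite dvdzE abszM Euclid_dvdM // -!dvdzE => /orP[] /dvdzP[q eq].
- have cqh : coprimez q h by apply: (coprimez_dvd cgh _ (dvdzz h)); rewrite eq dvdz_mulr.
  have q0 : 0 < q by move: g0; rewrite eq pmulr_lgt0.
  have e4 : q * h = p ^+ 4 by apply: (@mulfI _ (3 : int)); rewrite // mulrA [3 * q]mulrC -eq e.
  have [x [y [ex ey ep cxy]]] := coprimez_mul_fourth (ltW q0) (ltW h0) cqh e4.
  by exists x, y; split => //; left; rewrite eq ex mulrC.
- have cgq : coprimez g q by apply: (coprimez_dvd cgh (dvdzz g)); rewrite eq dvdz_mulr.
  have q0 : 0 < q by move: h0; rewrite eq pmulr_lgt0.
  have e4 : g * q = p ^+ 4 by apply: (@mulfI _ (3 : int)); rewrite // mulrCA [3 * q]mulrC -eq e.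
  have [y [x [ey ex ep cyx]]] := coprimez_mul_fourth (ltW g0) (ltW q0) cgq e4.
  exists x, y; split; rewrite 1?coprimez_sym 1?mulrC //.
  by right; rewrite eq ex mulrC.
Qed.

Lemma coprimez_mul_2sqr (a b c : int) :
  0 <= a -> 0 <= b -> coprimez a b -> a * b = 2 * c ^+ 2 ->
  exists p q k : int, [/\ q = 2 * k + 1, c ^+ 2 = p ^+ 2 * q ^+ 2 &
    (a = 2 * p ^+ 2 /\ b = q ^+ 2) \/ (a = q ^+ 2 /\ b = 2 * p ^+ 2)].
Proof.
move=> a0 b0 cab e.
have odd_root (n q : int) : n = q ^+ 2 -> (exists j, n = 2 * j + 1) -> exists k, q = 2 * k + 1.
  move=> -> [j ej]; have [k [ek|ek]] := even_or_odd q; last by exists k.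
  by move: ej; rewrite ek; lia.
have [m [ea|ea]] := even_or_odd a.
- have cmb : coprimez m b by apply: (coprimez_dvd cab _ (dvdzz b)); rewrite ea dvdz_mull.
  have emb : m * b = c ^+ 2 by apply: (@mulfI _ (2 : int)); rewrite // mulrA -ea e.
  have m0 : 0 <= m by lia.
  have [p [q [_ _ ep eq]]] := coprimez_mul_sqr cmb m0 b0 emb.
  have [k ek] : exists k, q = 2 * k + 1.
    apply: (odd_root _ _ eq); have [j [ej|ej]] := even_or_odd b; last by exists j.
    by have := coprimez_common_factor cab ea ej.
  by exists p, q, k; split => //; [rewrite -emb ep eq; ring | left; rewrite ea ep].
- have [n [eb|eb]] := even_or_odd b; last by move: e; rewrite ea eb; lia.
  have can : coprimez a n by apply: (coprimez_dvd cab (dvdzz a)); rewrite eb dvdz_mull.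
  have ean : a * n = c ^+ 2 by apply: (@mulfI _ (2 : int)); rewrite // mulrCA -eb e.
  have n0 : 0 <= n by lia.
  have [q [p [_ _ eq ep]]] := coprimez_mul_sqr can a0 n0 ean.
  have [k ek] : exists k, q = 2 * k + 1 by apply: (odd_root _ _ eq); exists m.
  by exists p, q, k; split => //; [rewrite -ean ep eq; ring | right; rewrite eb ep].
Qed.

Lemma dvd3_sqr (m t : int) : m ^+ 2 = 3 * t -> exists m', m = 3 * m'.
Proof. by have [q [->|[->|->]]] := mod3_cases m; [exists q | lia | lia]. Qed.

Lemma dvd3_sum_sqr (a b t : int) :
  a ^+ 2 + b ^+ 2 = 3 * t -> (exists a', a = 3 * a') /\ (exists b', b = 3 * b').
Proof.
have [qa [->|[->|->]]] := mod3_cases a; have [qb [->|[->|->]]] := mod3_cases b;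
  by [split; [exists qa | exists qb] | lia].
Qed.

Lemma dvd3_sqr_of_sum (a b t : int) : a ^+ 2 + b ^+ 2 = 3 * t -> (3 %| a ^+ 2)%Z.
Proof. by case/dvd3_sum_sqr => -[a' ->] _; rewrite exprMn dvdz_mulr. Qed.

(* The factorisation used in both descents below: if g h = 3 p^4 where g + h is
   nonnegative and coprime to p, then g and h are coprime and positive, so one of
   them is a fourth power and the other three times a fourth power. *)
Lemma mul_3fourth_split (g h p : int) :
  p != 0 -> 0 <= g + h -> coprimez (g + h) p -> g * h = 3 * p ^+ 4 ->
  exists x y : int, [/\ coprimez x y, p ^+ 2 = x ^+ 2 * y ^+ 2 &
    (g = 3 * x ^+ 4 /\ h = y ^+ 4) \/ (g = y ^+ 4 /\ h = 3 * x ^+ 4)].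
Proof.
move=> p0 gh0 cp e.
have p4 : 0 < p ^+ 4 by rewrite exprn_even_gt0.
have [g0 h0] : 0 < g /\ 0 < h by nia.
apply: coprimez_mul_3fourth => //; apply: coprimez_by_dvd => w wg wh.
have cw : coprimez w (p ^+ 4).
  by apply/coprimezXr/(coprimez_dvd cp _ (dvdzz p)); apply: rpredD.
have : (w ^+ 2 %| p ^+ 4 * 3)%Z by rewrite mulrC -e expr2 dvdz_mul.
rewrite Gauss_dvdzr; last by rewrite coprimezXl.
have w0 : (0 < `|w|)%N by rewrite absz_gt0; apply: contraTneq wg => ->; rewrite dvd0z gt_eqF.
by move/dvdn_leq; rewrite abszX => /(_ isT); nia.
Qed.

Lemma param_diff2 (r s b : int) :
  coprimez r s -> 0 <= r -> 0 <= b -> r ^+ 2 - 2 * s ^+ 2 = b ^+ 2 ->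
  exists p q k : int, [/\ q = 2 * k + 1, coprimez p q,
    r = q ^+ 2 + 2 * p ^+ 2 & s ^+ 2 = 4 * (p ^+ 2 * q ^+ 2)].
Proof.
move=> crs r0 b0 e.
have [k er] : exists k, r = 2 * k + 1.
  have [k [er|er]] := even_or_odd r; last by exists k.
  have [j [es|es]] := even_or_odd s; first by have := coprimez_common_factor crs er es.
  by have [l [eb|eb]] := even_or_odd b; move: e; rewrite er es eb !expr2; clear; lia.
have [t es] : exists t, s = 2 * t.
  have [j [es|es]] := even_or_odd s; first by exists j.
  by have [l [eb|eb]] := even_or_odd b; move: e; rewrite er es eb !expr2; clear; lia.
have [j eb] : exists j, b = 2 * j + 1.
  have [l [eb|eb]] := even_or_odd b; last by exists l.
  by move: e; rewrite er es eb !expr2; clear; lia.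
(* (r - b)/2 and (r + b)/2 are coprime, with product 2 t^2 *)
have e2 : (k - j) * (k + j + 1) = 2 * t ^+ 2 by move: e; rewrite er es eb !expr2; clear; lia.
have cop : coprimez (k - j) (k + j + 1).
  apply: coprimez_by_dvd => w w1 w2.
  have wr : (w %| r)%Z by rewrite (_ : r = (k - j) + (k + j + 1)); [apply: rpredD | clear -er; lia].
  have wb : (w %| b)%Z by rewrite (_ : b = (k + j + 1) - (k - j)); [apply: rpredB | clear -eb; lia].
  have cw2 : coprimez w 2 by apply: (coprimez_dvd (coprimez_odd er) wr (dvdzz 2)).
  have : (w %| 2 * s ^+ 2)%Z.
    rewrite (_ : 2 * s ^+ 2 = r * r - b * b); first by apply: rpredB; apply: dvdz_mulr.
    by move: e; rewrite !expr2; clear; lia.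
  rewrite Gauss_dvdzr // => ws.
  exact: (coprimez_dvd_unit (coprimezXr 2 crs) wr ws).
have hpos : 0 < k + j + 1 by clear -r0 b0 er eb; lia.
have lpos : 0 <= k - j by rewrite -(pmulr_lge0 _ hpos) e2 mulr_ge0 ?sqr_ge0.
have [p [q [kq [eq et epq]]]] := coprimez_mul_2sqr lpos (ltW hpos) cop e2.
have er' : r = q ^+ 2 + 2 * p ^+ 2.
  by case: epq => -[e1 e3]; move: e1 e3; rewrite er; clear; lia.
have es' : s ^+ 2 = 4 * (p ^+ 2 * q ^+ 2) by rewrite es -et; ring.
exists p, q, kq; split => //.
apply: coprimez_by_dvd => w wp wq; apply: (coprimez_dvd_unit crs).
- by rewrite er' rpredD ?dvdz_mull ?dvdz_exp.
- by rewrite -(@dvdz_pexp2r w s 2) // es' dvdz_mull // dvdz_mulr // dvdz_exp2r.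
Qed.

Lemma sqr_factors_3 (x y q k : int) :
  q = 2 * k + 1 -> coprimez x y -> (y ^+ 2 - x ^+ 2) * (y ^+ 2 - 3 * x ^+ 2) = q ^+ 2 ->
  exists c d : int, y ^+ 2 - x ^+ 2 = c ^+ 2 /\ y ^+ 2 - 3 * x ^+ 2 = d ^+ 2.
Proof.
move=> eq cxy e.
set A := y ^+ 2 - x ^+ 2 in e *; set B := y ^+ 2 - 3 * x ^+ 2 in e *.
have [m eA] : exists m, A = 2 * m + 1.
  have [m [eA|eA]] := even_or_odd A; last by exists m.
  by move: e; rewrite eA eq !expr2; clear; lia.
have cAB : coprimez A B.
  apply: coprimez_by_dvd => w wA wB.
  have cw2 : coprimez w 2 by apply: (coprimez_dvd (coprimez_odd eA) wA (dvdzz 2)).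
  have wx : (w %| 2 * x ^+ 2)%Z.
    by rewrite (_ : 2 * x ^+ 2 = A - B); [exact: rpredB | rewrite /A /B; ring].
  have wy : (w %| 2 * y ^+ 2)%Z.
    by rewrite (_ : 2 * y ^+ 2 = 3 * A - B); [rewrite rpredB ?dvdz_mull | rewrite /A /B; ring].
  move: wx wy; rewrite !(Gauss_dvdzr _ cw2) => wx wy.
  exact: (coprimez_dvd_unit (coprimezXl 2 (coprimezXr 2 cxy)) wx wy).
have AB0 : 0 < A * B by rewrite e exprn_even_gt0 // eq; apply/eqP; clear; lia.
case: (ltrgtP 0 A) => [A0|A0|A0]; last by move: AB0; rewrite -A0 mul0r ltxx.
- have B0 : 0 < B by rewrite -(pmulr_rgt0 _ A0).
  have [c [d [_ _ eAc eBd]]] := coprimez_mul_sqr cAB (ltW A0) (ltW B0) e.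
  by exists c, d.
- (* x^2 - y^2 and 3 x^2 - y^2 cannot both be squares: look modulo 4 *)
  have B0 : B < 0 by rewrite -(nmulr_rgt0 _ A0).
  have cAB' : coprimez (- A) (- B) by rewrite coprimeNz coprimezN.
  have nA : 0 <= - A by rewrite oppr_ge0 ltW.
  have nB : 0 <= - B by rewrite oppr_ge0 ltW.
  have [c [d [_ _ eAc eBd]]] := coprimez_mul_sqr cAB' nA nB (etrans (mulrNN A B) e).
  have [kx [ex|ex]] := even_or_odd x; have [ky [ey|ey]] := even_or_odd y;
    have [kc [ec|ec]] := even_or_odd c; have [kd [ed|ed]] := even_or_odd d;
    by move: eA eAc eBd; rewrite /A /B ?ex ?ey ?ec ?ed !expr2; clear; lia.
Qed.

(* Second half of the first descent: writing r = q^2 + 2 p^2 and s = +-2pq, the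
   equation r^2 + s^2 = a^2 produces a new solution (c, x) of the system
   c^2 + x^2 = y^2, c^2 - 2 x^2 = d^2 with x^2 <= p^2. *)
Lemma sum_diff2_step (p q k a : int) :
  q = 2 * k + 1 -> coprimez p q -> p != 0 -> 0 <= a ->
  (q ^+ 2 + 2 * p ^+ 2) ^+ 2 + 4 * (p ^+ 2 * q ^+ 2) = a ^+ 2 ->
  exists c x y d : int, [/\ coprimez c x, c ^+ 2 + x ^+ 2 = y ^+ 2,
    c ^+ 2 - 2 * x ^+ 2 = d ^+ 2, x != 0 & x ^+ 2 <= p ^+ 2].
Proof.
move=> eq cpq p0 a0 e.
set S := q ^+ 2 + 4 * p ^+ 2.
have S0 : 0 <= S by rewrite /S addr_ge0 ?sqr_ge0 // mulr_ge0 ?sqr_ge0.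
have eSa : S ^+ 2 - a ^+ 2 = 12 * p ^+ 4 by rewrite -e /S; ring.
(* (S - a)/2 and (S + a)/2 are integers with product 3 p^4 *)
have [i ea] : exists i, a = 2 * i + 1.
  have [i [ea|ea]] := even_or_odd a; last by exists i.
  by move: e; rewrite ea eq !expr2; clear; lia.
have [m eS] : exists m, S = 2 * m + 1.
  by exists (2 * k ^+ 2 + 2 * k + 2 * p ^+ 2); rewrite /S eq; ring.
have eGH : (m - i) * (m + i + 1) = 3 * p ^+ 4.
  apply: (@mulfI _ (4 : int)) => //.
  have -> : 4 * (3 * p ^+ 4) = S ^+ 2 - a ^+ 2 by rewrite eSa; ring.
  by rewrite eS ea; ring.
have sum_eq : (m - i) + (m + i + 1) = S by rewrite eS; ring.
have cSp : coprimez ((m - i) + (m + i + 1)) p.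
  rewrite sum_eq; apply: coprimez_by_dvd => w wS wp.
  apply: (coprimez_dvd_unit (coprimezXr 2 cpq) wp).
  have -> : q ^+ 2 = S - 4 * p ^+ 2 by rewrite /S; ring.
  by rewrite rpredB // dvdz_mull // dvdz_exp.
have sum0 : 0 <= (m - i) + (m + i + 1) by rewrite sum_eq.
have [x [y [cxy ep eGH']]] := mul_3fourth_split p0 sum0 cSp eGH.
have eS3 : S = 3 * x ^+ 4 + y ^+ 4.
  by rewrite -sum_eq; case: eGH' => -[-> ->]; ring.
have eq2 : (y ^+ 2 - x ^+ 2) * (y ^+ 2 - 3 * x ^+ 2) = q ^+ 2.
  have -> : q ^+ 2 = S - 4 * p ^+ 2 by rewrite /S; ring.
  by rewrite eS3 ep; ring.
have [c [d [ec ed]]] := sqr_factors_3 eq cxy eq2.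
have y0 : y != 0.
  by apply: contra_neq p0 => y0; apply/eqP; rewrite -sqrf_eq0; apply/eqP; rewrite ep y0; ring.
exists c, x, y, d; split.
- apply: coprimez_by_dvd => w wc wx.
  apply: (coprimez_dvd_unit (coprimezXr 2 cxy) wx).
  have -> : y ^+ 2 = c ^+ 2 + x ^+ 2 by rewrite -ec; ring.
  by rewrite rpredD ?dvdz_exp.
- by rewrite -ec; ring.
- by rewrite -ec -ed; ring.
- by apply: contra_neq p0 => x0; apply/eqP; rewrite -sqrf_eq0; apply/eqP; rewrite ep x0; ring.
- rewrite ep ler_peMr ?sqr_ge0 //.
  by have : 0 < y ^+ 2 by rewrite exprn_even_gt0.
Qed.

Lemma sum_diff2_sqr (r s a b : int) :
  coprimez r s -> r ^+ 2 + s ^+ 2 = a ^+ 2 -> r ^+ 2 - 2 * s ^+ 2 = b ^+ 2 -> s = 0.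
Proof.
move: {2}`|s|%N (leqnn `|s|%N) => n; elim: n r s a b => [|n IH] r s a b hs crs ea eb.
  by apply/eqP; rewrite -absz_eq0; move: hs; clear; lia.
apply/eqP/negPn/negP => s0.
have [r1 r10 er] := sqr_nonneg_root r.
have [a1 a10 ea1] := sqr_nonneg_root a.
have [b1 b10 eb1] := sqr_nonneg_root b.
have cr1s : coprimez r1 s by case: (sqr_eq_cases er) => e; move: crs; rewrite e ?coprimeNz.
rewrite er eb1 in eb; rewrite er ea1 in ea.
have [p [q [k [eq cpq er1 es]]]] := param_diff2 cr1s r10 b10 eb.
have p0 : p != 0.
  by apply: contra_neq s0 => p0; apply/eqP; rewrite -sqrf_eq0; apply/eqP; rewrite es p0; ring.
have [c [x [y [d [ccx ecx ecd x0 xp]]]]] : exists c x y d : int, [/\ coprimez c x,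
    c ^+ 2 + x ^+ 2 = y ^+ 2, c ^+ 2 - 2 * x ^+ 2 = d ^+ 2, x != 0 & x ^+ 2 <= p ^+ 2].
  by apply: (sum_diff2_step eq cpq p0 a10); rewrite -er1 -es.
have xs : (`|x| < `|s|)%N.
  apply: abs_lt_of_sqr_lt; apply: (le_lt_trans xp); rewrite es.
  have q0 : q != 0 by rewrite eq; apply/eqP; clear; lia.
  have p2 : 0 < p ^+ 2 by rewrite exprn_even_gt0.
  have q2 : 0 < q ^+ 2 by rewrite exprn_even_gt0.
  clear -p2 q2; nia.
by move/eqP: x0; apply; apply: (IH c x y d _ ccx ecx ecd); move: hs xs; clear; lia.
Qed.

Lemma four_number (P Q M N : int) :
  P != 0 -> M != 0 -> P * Q = M * N ->
  exists al be ga de : int,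
    [/\ P = al * be, M = al * ga, Q = ga * de, N = be * de & coprimez be ga].
Proof.
move=> P0 M0 e; set al := gcdz P M.
have al0 : al != 0 by rewrite gcdz_eq0 negb_and P0.
have eP : P = al * (P %/ al)%Z by rewrite mulrC divzK // dvdz_gcdl.
have eM : M = al * (M %/ al)%Z by rewrite mulrC divzK // dvdz_gcdr.
set be := (P %/ al)%Z in eP *; set ga := (M %/ al)%Z in eM *.
have cbg : coprimez be ga.
  have al_abs : `|al|%:Z = al by rewrite gez0_abs.
  apply/eqP; apply: (mulIf al0).
  by rewrite mul1r -{1}al_abs mulz_gcdl -!(mulrC al) -eP -eM.
have ga0 : ga != 0 by apply: contra_neq M0 => ga0; rewrite eM ga0 mulr0.
have eQN : be * Q = ga * N by apply: (mulfI al0); rewrite !mulrA -eP -eM.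
have /dvdzP[de eQ] : (ga %| Q)%Z.
  by rewrite -(Gauss_dvdzr _ (_ : coprimez ga be)) 1?coprimez_sym // eQN dvdz_mulr.
exists al, be, ga, de; split => //; first by rewrite mulrC.
by apply: (mulfI ga0); rewrite -eQN eQ; ring.
Qed.

Lemma coprimez_sub_sqr (a d : int) : coprimez a d -> coprimez a (a ^+ 2 - d ^+ 2).
Proof.
move=> cad; apply: coprimez_by_dvd => g ga gs.
apply: (coprimez_dvd_unit (coprimezXr 2 cad) ga).
have -> : d ^+ 2 = a ^+ 2 - (a ^+ 2 - d ^+ 2) by ring.
by rewrite rpredB ?dvdz_exp.
Qed.

Lemma dvd_cofactor_sub_sqr (a d X Y : int) :
  coprimez a d -> (a ^+ 2 - d ^+ 2) * X = a * d * Y -> (a * d %| X)%Z.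
Proof.
move=> cad e; rewrite Gauss_dvdz //; apply/andP; split.
- rewrite -(Gauss_dvdzr _ (coprimez_sub_sqr cad)) e -mulrA dvdz_mulr //.
- have cda : coprimez d (a ^+ 2 - d ^+ 2).
    by rewrite -coprimezN opprB coprimez_sub_sqr // coprimez_sym.
  by rewrite -(Gauss_dvdzr _ cda) e mulrAC dvdz_mull.
Qed.

Lemma mul_eq2_cases (k l : int) :
  k * l = 2 -> (k ^+ 2 = 1 /\ l ^+ 2 = 4) \/ (k ^+ 2 = 4 /\ l ^+ 2 = 1).
Proof.
move=> e; have k0 : k != 0 by apply: contra_eq_neq e => ->; rewrite mul0r.
have kd : (k %| 2)%Z by apply/dvdzP; exists l; rewrite mulrC.
have hk : (`|k| <= 2)%N by apply: dvdn_leq.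
have : k = 1 \/ k = -1 \/ k = 2 \/ k = -2 by move: k0; clear -hk; lia.
case=> [ek|[ek|[ek|ek]]]; rewrite ek in e *; [left | left | right | right];
  by split => //; clear -e; nia.
Qed.

Lemma quartic_of_sqr_diffs (x y u v c d : int) :
  coprimez x y -> u * v != 0 -> c ^+ 2 = 4 -> d ^+ 2 = 1 ->
  x ^+ 2 - y ^+ 2 = c * (u * v) -> u ^+ 2 - v ^+ 2 = d * (x * y) ->
  exists k l : int, [/\ x = 2 * k + 1, y = 2 * l + 1,
    x ^+ 4 - x ^+ 2 * y ^+ 2 + y ^+ 4 = (u ^+ 2 + v ^+ 2) ^+ 2 & x ^+ 2 != y ^+ 2].
Proof.
move=> cxy uv0 ec ed e1 e2.
have [c' ec'] : exists c', c = 2 * c'.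
  by case: (sqr_eq_cases (etrans ec (_ : 4 = 2 ^+ 2))) => // ->; [exists 1 | exists (-1)].
have [kx [ex|ex]] := even_or_odd x; have [ky [ey|ey]] := even_or_odd y;
  try by [have := coprimez_common_factor cxy ex ey
         | move: e1; rewrite ex ey ec' !expr2; clear; lia].
exists kx, ky; split => //.
- have sx : (x ^+ 2 - y ^+ 2) ^+ 2 = 4 * (u * v) ^+ 2 by rewrite e1 exprMn ec.
  have sy : (x * y) ^+ 2 = (u ^+ 2 - v ^+ 2) ^+ 2 by rewrite e2 [RHS]exprMn ed mul1r.
  have -> : x ^+ 4 - x ^+ 2 * y ^+ 2 + y ^+ 4 = (x ^+ 2 - y ^+ 2) ^+ 2 + (x * y) ^+ 2 by ring.
  by rewrite sx sy; ring.
- by rewrite -subr_eq0 e1 mulf_neq0 //; apply: contra_eq_neq ec => ->.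
Qed.

(* Writing P = al be, M = al ga, Q = ga de,
   N = be de, the hypothesis becomes (al^2 - de^2)(be^2 - ga^2) = 2 al be ga de. *)
Lemma quartic_of_pythag (P Q M N : int) :
  coprimez P Q -> P * Q != 0 -> P * Q = M * N -> P ^+ 2 + Q ^+ 2 = (M + N) ^+ 2 ->
  exists x y z k l : int, [/\ x = 2 * k + 1, y = 2 * l + 1, coprimez x y,
    x ^+ 4 - x ^+ 2 * y ^+ 2 + y ^+ 4 = z ^+ 2 & x ^+ 2 != y ^+ 2 /\ (y %| Q)%Z].
Proof.
move=> cPQ PQ0 eMN ePQ; have := PQ0; rewrite mulf_eq0 negb_or => /andP[P0 Q0].
have M0 : M != 0 by apply: contraNneq PQ0 => M0; rewrite eMN M0 mul0r.
have [al [be [ga [de [eP eM eQ eN cbg]]]]] := four_number P0 M0 eMN.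
have cad : coprimez al de.
  by apply: (coprimez_dvd cPQ); [rewrite eP dvdz_mulr | rewrite eQ dvdz_mull].
have nz : al * be * ga * de != 0 by move: PQ0; rewrite eP eQ !mulrA.
have key : (al ^+ 2 - de ^+ 2) * (be ^+ 2 - ga ^+ 2) = 2 * (al * be * ga * de).
  apply/eqP; rewrite -subr_eq0 -(subrr ((M + N) ^+ 2)) -{1}ePQ eP eQ eM eN.
  by apply/eqP; ring.
have /dvdzP[l el] : (al * de %| be ^+ 2 - ga ^+ 2)%Z.
  by apply: (dvd_cofactor_sub_sqr (Y := 2 * be * ga) cad); rewrite key; ring.
have /dvdzP[k ek] : (be * ga %| al ^+ 2 - de ^+ 2)%Z.
  by apply: (dvd_cofactor_sub_sqr (Y := 2 * al * de) cbg); rewrite mulrC key; ring.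
have ekl : k * l = 2.
  by apply: (mulIf nz); rewrite -key ek el; ring.
have : (al * de) * (be * ga) != 0 by apply: contra_neq nz => <-; ring.
rewrite mulf_eq0 negb_or => /andP[ad0 bg0].
case: (mul_eq2_cases ekl) => -[k2 l2].
- have [kx [ky [ex ey eq nxy]]] := quartic_of_sqr_diffs cbg ad0 l2 k2 el ek.
  exists be, ga, (al ^+ 2 + de ^+ 2), kx, ky; split => //.
  by split => //; rewrite eQ dvdz_mulr.
- have [kx [ky [ex ey eq nxy]]] := quartic_of_sqr_diffs cad bg0 k2 l2 ek el.
  exists al, de, (be ^+ 2 + ga ^+ 2), kx, ky; split => //.
  by split => //; rewrite eQ dvdz_mull.
Qed.

(* Factoring x^4 - x^2 y^2 + y^4 = z^2 (x, y odd and coprime):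
   G = 2z - (2x^2 - y^2) and H = 2z + (2x^2 - y^2) satisfy G H = 3 y^4, so
   H - G = 4x^2 - 2y^2 is +-(f^4 - 3e^4) with y^2 = e^2 f^2 and e, f coprime. *)
Lemma quartic_factor (x y z kx ky : int) :
  x = 2 * kx + 1 -> y = 2 * ky + 1 -> coprimez x y ->
  x ^+ 4 - x ^+ 2 * y ^+ 2 + y ^+ 4 = z ^+ 2 ->
  exists e f : int, [/\ coprimez e f, y ^+ 2 = e ^+ 2 * f ^+ 2 &
    4 * x ^+ 2 - 2 * y ^+ 2 = f ^+ 4 - 3 * e ^+ 4 \/
    4 * x ^+ 2 - 2 * y ^+ 2 = 3 * e ^+ 4 - f ^+ 4].
Proof.
move=> ex ey cxy eq.
have [z0 z00 ez] := sqr_nonneg_root z; rewrite ez in eq.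
set G := 2 * z0 - (2 * x ^+ 2 - y ^+ 2); set H := 2 * z0 + (2 * x ^+ 2 - y ^+ 2).
have eGH : G * H = 3 * y ^+ 4.
  have -> : G * H = 4 * z0 ^+ 2 - (2 * x ^+ 2 - y ^+ 2) ^+ 2 by rewrite /G /H; ring.
  by rewrite -eq; ring.
have y0 : y != 0 by rewrite ey; apply/eqP; clear; lia.
have sum_eq : G + H = 4 * z0 by rewrite /G /H; ring.
have cSy : coprimez (G + H) y.
  rewrite sum_eq; apply: coprimez_by_dvd => w wz wy.
  have cw2 : coprimez w 2 by apply: (coprimez_dvd (coprimez_odd ey) wy (dvdzz 2)).
  have cw4 : coprimez w 4 by rewrite (_ : 4 = 2 ^+ 2) // coprimezXr.
  rewrite Gauss_dvdzr // in wz.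
  have wx : (w %| x ^+ 4)%Z.
    have -> : x ^+ 4 = z0 ^+ 2 + x ^+ 2 * y ^+ 2 - y ^+ 4 by rewrite -eq; ring.
    by rewrite rpredB ?rpredD ?dvdz_exp ?dvdz_mull.
  exact: (coprimez_dvd_unit (coprimezXl 4 cxy) wx wy).
have sum0 : 0 <= G + H by rewrite sum_eq mulr_ge0.
have [e [f [cef ey2 eGH']]] := mul_3fourth_split y0 sum0 cSy eGH.
exists e, f; split => //.
have -> : 4 * x ^+ 2 - 2 * y ^+ 2 = H - G by rewrite /G /H; ring.
by case: eGH' => -[-> ->]; [left | right].
Qed.

Lemma odd_sqr_factors (y e f k : int) :
  y = 2 * k + 1 -> y ^+ 2 = e ^+ 2 * f ^+ 2 ->
  (exists ke, e = 2 * ke + 1) /\ (exists kf, f = 2 * kf + 1).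
Proof.
move=> ey e2.
have [ke [ee|ee]] := even_or_odd e; have [kf [ef|ef]] := even_or_odd f;
  by [split; [exists ke | exists kf] | move: e2; rewrite ey ee ef !expr2; clear; lia].
Qed.

(* The first alternative of [quartic_factor] is impossible modulo 16. *)
Lemma quartic_factor_mod16 (x y e f kx ky : int) :
  x = 2 * kx + 1 -> y = 2 * ky + 1 -> y ^+ 2 = e ^+ 2 * f ^+ 2 ->
  4 * x ^+ 2 - 2 * y ^+ 2 <> f ^+ 4 - 3 * e ^+ 4.
Proof.
move=> ex ey e2; have [[ke ee] [kf ef]] := odd_sqr_factors ey e2.
have [t et] := odd_sqr ee; have [u eu] := odd_sqr ef.
have [v ev] := odd_sqr ex; have [w ew] := odd_sqr ey.
have sqr2 (n : int) : n ^+ 4 = (n ^+ 2) ^+ 2 by rewrite -exprM.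
rewrite !sqr2 et eu ev ew !expr2; clear; lia.
Qed.

(* The second alternative of [quartic_factor] yields a new solution (g, e) of
   2 g^2 - e^2 = f^2, 2 e^2 - g^2 = h^2 with g^2, e^2 <= y^2: writing e^2 = 8t+1
   and f^2 = 8u+1, x^2 = (12t - 4u + 1)(4t + 4u + 1) with coprime factors, which
   are therefore the squares h^2 and g^2. *)
Lemma double_diff_of_quartic (x y e f ky : int) :
  y = 2 * ky + 1 -> coprimez e f -> y ^+ 2 = e ^+ 2 * f ^+ 2 ->
  4 * x ^+ 2 - 2 * y ^+ 2 = 3 * e ^+ 4 - f ^+ 4 -> x ^+ 2 != y ^+ 2 ->
  exists g h : int, [/\ coprimez g e, 2 * g ^+ 2 - e ^+ 2 = f ^+ 2,
    2 * e ^+ 2 - g ^+ 2 = h ^+ 2, g ^+ 2 != e ^+ 2 & g ^+ 2 <= y ^+ 2 /\ e ^+ 2 <= y ^+ 2].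
Proof.
move=> ey cef e2 E nxy.
have [[ke ee] [kf ef]] := odd_sqr_factors ey e2.
have [t et] := odd_sqr ee; have [u eu] := odd_sqr ef.
have sqr2 (n : int) : n ^+ 4 = (n ^+ 2) ^+ 2 by rewrite -exprM.
have t0 : 0 <= t by have := sqr_ge0 e; rewrite et; clear; lia.
have u0 : 0 <= u by have := sqr_ge0 f; rewrite eu; clear; lia.
set A := 12 * t - 4 * u + 1; set B := 4 * t + 4 * u + 1.
have eAB : A * B = x ^+ 2.
  by move: E; rewrite e2 !sqr2 et eu /A /B !expr2; clear; lia.
have B0 : 0 < B by rewrite /B; clear -t0 u0; lia.
have A0 : 0 <= A by rewrite -(pmulr_lge0 _ B0) eAB sqr_ge0.
have cAB : coprimez A B.
  apply: coprimez_by_dvd => w wA wB.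
  have cB2 : coprimez B 2 by apply: (coprimez_odd (k := 2 * t + 2 * u)); rewrite /B; ring.
  have cw4 : coprimez w 4.
    by rewrite (_ : 4 = 2 ^+ 2) // coprimezXr // (coprimez_dvd cB2 wB (dvdzz 2)).
  have we : (w %| 4 * e ^+ 2)%Z.
    have -> : 4 * e ^+ 2 = 2 * A + 2 * B by rewrite et /A /B; ring.
    by rewrite rpredD ?dvdz_mull.
  have wf : (w %| 4 * f ^+ 2)%Z.
    have -> : 4 * f ^+ 2 = 6 * B - 2 * A by rewrite eu /A /B; ring.
    by rewrite rpredB ?dvdz_mull.
  rewrite !(Gauss_dvdzr _ cw4) in we wf.
  exact: (coprimez_dvd_unit (coprimezXl 2 (coprimezXr 2 cef)) we wf).
have [h [g [_ _ eAh eBg]]] := coprimez_mul_sqr cAB A0 (ltW B0) eAB.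
exists g, h; split.
- apply: coprimez_by_dvd => w wg we.
  apply: (coprimez_dvd_unit (coprimezXr 2 cef) we).
  have -> : f ^+ 2 = 2 * g ^+ 2 - e ^+ 2 by rewrite -eBg et eu /B; clear; lia.
  by rewrite rpredB ?dvdz_mull ?dvdz_exp.
- by rewrite -eBg et eu /B; clear; lia.
- by rewrite -eBg -eAh et /A /B; clear; lia.
- apply: contra_neq nxy => ge.
  have tu : u = t by move: ge; rewrite -eBg et /B; clear; lia.
  have fe : f ^+ 2 = e ^+ 2 by rewrite eu et tu.
  have e1 : `|e|%N = 1%N.
    by apply: (coprimez_dvd_unit cef (dvdzz e)); case: (sqr_eq_cases fe) => ->;
      rewrite ?rpredN dvdzz.
  have t00 : t = 0 by move: (sqr_unit e1); rewrite et; clear; lia.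
  by rewrite -eAB e2 et eu /A /B tu t00; clear; lia.
- by rewrite e2 -eBg et eu /B; split; clear -t0 u0; nia.
Qed.

Lemma double_diff_odd (r s a b : int) :
  coprimez r s -> 2 * r ^+ 2 - s ^+ 2 = a ^+ 2 -> 2 * s ^+ 2 - r ^+ 2 = b ^+ 2 ->
  exists k j i l : int,
    [/\ r = 2 * k + 1, s = 2 * j + 1, a = 2 * i + 1 & b = 2 * l + 1].
Proof.
move=> crs ea eb.
have [k [er|er]] := even_or_odd r; have [j [es|es]] := even_or_odd s.
- by have := coprimez_common_factor crs er es.
- by have [l [el|el]] := even_or_odd b; move: eb; rewrite el er es !expr2; clear; lia.
- by have [i [ei|ei]] := even_or_odd a; move: ea; rewrite ei er es !expr2; clear; lia.
have [i [ei|ei]] := even_or_odd a; first by move: ea; rewrite ei er es !expr2; clear; lia.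
have [l [el|el]] := even_or_odd b; first by move: eb; rewrite el er es !expr2; clear; lia.
by exists k, j, i, l.
Qed.

(* For coprime r, s with 2 r^2 - s^2 = a^2,
   2 s^2 - r^2 = b^2 and r^2 <> s^2, the integers
   P = (a + s)/2, Q = (a - s)/2, M = (r + b)/2, N = (r - b)/2 satisfy
   P^2 + Q^2 = (M + N)^2 and P Q = M N, and [quartic_of_pythag], [quartic_factor]
   and [double_diff_of_quartic] produce a new solution (g, e) with |g| < |r|. *)
Lemma double_diff_step (r s a b : int) :
  coprimez r s -> 2 * r ^+ 2 - s ^+ 2 = a ^+ 2 -> 2 * s ^+ 2 - r ^+ 2 = b ^+ 2 ->
  r ^+ 2 != s ^+ 2 ->
  exists g e f h : int, [/\ coprimez g e, 2 * g ^+ 2 - e ^+ 2 = f ^+ 2,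
    2 * e ^+ 2 - g ^+ 2 = h ^+ 2, g ^+ 2 != e ^+ 2 & (`|g| < `|r|)%N].
Proof.
move=> crs ea eb nrs.
have [k [j [i [l [er es ei el]]]]] := double_diff_odd crs ea eb.
set P := i + j + 1; set Q := i - j; set M := k + l + 1; set N := k - l.
have ePQ : P ^+ 2 + Q ^+ 2 = r ^+ 2.
  by move: ea; rewrite /P /Q ei es er !expr2; clear; lia.
have eMN : P * Q = M * N.
  by move: ea eb; rewrite /P /Q /M /N ei el es er !expr2; clear; lia.
have rMN : r = M + N by rewrite er /M /N; ring.
have PQ0 : P * Q != 0.
  apply: contra_neq nrs => PQ0; move: ea PQ0.
  by rewrite /P /Q ei es er !expr2; clear; lia.
have cPQ : coprimez P Q.
  apply: coprimez_by_dvd => w wP wQ; apply: (coprimez_dvd_unit crs).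
  - rewrite -(@dvdz_pexp2r w r 2) // -ePQ.
    by rewrite rpredD // dvdz_exp2r.
  - have -> : s = P - Q by rewrite /P /Q es; ring.
    exact: rpredB.
have [x [y [z [kx [ky [ex ey cxy eq [nxy yQ]]]]]]] :=
  quartic_of_pythag cPQ PQ0 eMN (etrans ePQ (congr1 (fun t => t ^+ 2) rMN)).
have [e [f [cef ey2 [E|E]]]] := quartic_factor ex ey cxy eq.
  by have := quartic_factor_mod16 ex ey ey2 E.
have [g [h [cge eg eh nge [gy _]]]] := double_diff_of_quartic ey cef ey2 E nxy.
exists g, e, f, h; split => //; apply: abs_lt_of_sqr_lt.
have [m em] := dvdzP yQ.
have m0 : m != 0 by apply: contraNneq PQ0 => m0; rewrite em m0 mul0r mulr0.
have P2 : 0 < P ^+ 2.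
  by rewrite exprn_even_gt0 //; apply: contraNneq PQ0 => ->; rewrite mul0r.
have m2 : 0 < m ^+ 2 by rewrite exprn_even_gt0.
rewrite -ePQ em; apply: (le_lt_trans gy).
by move: (sqr_ge0 y); rewrite exprMn; clear -P2 m2; nia.
Qed.

Lemma double_diff_sqr (r s a b : int) :
  coprimez r s -> 2 * r ^+ 2 - s ^+ 2 = a ^+ 2 -> 2 * s ^+ 2 - r ^+ 2 = b ^+ 2 ->
  r ^+ 2 = s ^+ 2.
Proof.
move: {2}`|r|%N (leqnn `|r|%N) => n; elim: n r s a b => [|n IH] r s a b hr crs ea eb.
  have r0 : r = 0 by move: hr; clear; lia.
  move: ea; rewrite r0 expr0n /= mulr0 sub0r => ea.
  by have := sqr_ge0 a; have := sqr_ge0 s; move: ea; clear; lia.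
have [//|nrs] := eqVneq (r ^+ 2) (s ^+ 2).
have [g [e [f [h [cge eg eh nge gr]]]]] := double_diff_step crs ea eb nrs.
by case/eqP: nge; apply: (IH g e f h) => //; move: hr gr; clear; lia.
Qed.

Definition int_square (n : int) : Prop := exists k : int, n = k ^+ 2.

Lemma int_square_cancel (c n : int) : c != 0 -> int_square (c ^+ 2 * n) -> int_square n.
Proof.
move=> c0 [k ek].
have /dvdzP[m em] : (c %| k)%Z by rewrite -(@dvdz_pexp2r _ _ 2) // -ek dvdz_mulr.
exists m; apply: (mulfI (_ : c ^+ 2 != 0)); first by rewrite expf_neq0.
by rewrite ek em exprMn mulrC.
Qed.

Lemma rat_sqr_int (m : int) (t : rat) : m%:~R = t ^+ 2 -> int_square m.
Proof.
move=> e.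
have d0 : (denq t)%:~R != 0 :> rat by rewrite intr_eq0 denq_neq0.
have e2 : m * denq t ^+ 2 = numq t ^+ 2.
  apply: (@intr_inj rat); rewrite rmorphM /= !rmorphXn /= e -{1}[t]divq_num_den.
  by rewrite expr_div_n mulfVK // expf_neq0.
have : (denq t ^+ 2 %| numq t ^+ 2 * 1)%Z by rewrite mulr1 -e2 dvdz_mull.
rewrite Gauss_dvdzr; last first.
  by rewrite coprimezXl // coprimezXr // coprimez_sym; apply: coprime_num_den.
rewrite dvdz1 abszX => /eqP d1.
have den1 : denq t = 1 by have := denq_gt0 t; nia.
by exists (numq t); rewrite -e2 den1 expr1n mulr1.
Qed.

Lemma same_sq_class_int (x y : int) :
  same_sq_class x%:~R y%:~R -> x != 0 /\ int_square (x * y).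
Proof.
case=> x0 [y0 [q eq]]; split; first by rewrite intr_eq0 in x0.
apply: (@rat_sqr_int _ (q * y%:~R)).
by rewrite rmorphM /= exprMn -eq expr2 mulrA divfK.
Qed.

Lemma dvdz_coprime_multiples (c m n g : int) :
  coprimez m n -> (g %| c * m)%Z -> (g %| c * n)%Z -> (g %| c)%Z.
Proof.
case/coprimezP=> -[x y] /= exy gm gn.
have -> : c = x * (c * m) + y * (c * n) by rewrite -[LHS]mulr1 -exy; ring.
by apply: rpredD; apply: dvdz_mull.
Qed.

Lemma dvd3_of_square_3 (e n : int) : e ^+ 2 = 1 -> int_square (e * (3 * n)) -> (3 %| n)%Z.
Proof.
move=> e2 [k ek].
have [k' ek'] : exists k', k = 3 * k' by apply: (dvd3_sqr (t := e * n)); rewrite -ek; ring.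
rewrite ek' in ek.
apply/dvdzP; exists (e * k' ^+ 2); apply: (@mulfI _ (3 : int)) => //.
have -> : 3 * n = e * (3 * k') ^+ 2 by rewrite -ek mulrA -expr2 e2 mul1r.
ring.
Qed.

Lemma dvdz3_cases (g : int) : (g %| 3)%Z -> `|g|%N = 1%N \/ (3 %| g)%Z.
Proof.
move=> g3; have /primeP[_ /(_ _ g3) /orP[/eqP|/eqP g3']] := (isT : prime 3).
  by left.
by right; rewrite dvdzE g3'.
Qed.

(* Arithmetic of u = r^2 + s^2 and v = 2 r^2 - s^2.  The quantity u - v is
   v with r and s exchanged, which is why [v_of s r] appears below. *)
Lemma u_add_v (r s : int) : u_of r s + v_of r s = 3 * r ^+ 2.
Proof. by rewrite /u_of /v_of; ring. Qed.

Lemma u_sub_v (r s : int) : u_of r s - v_of r s = v_of s r.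
Proof. by rewrite /u_of /v_of; ring. Qed.

Lemma u_gt0 (r s : int) : r != 0 -> 0 < u_of r s.
Proof. by move=> r0; rewrite /u_of ltr_pwDl ?sqr_ge0 ?exprn_even_gt0. Qed.

Lemma not_dvd3_u (r s : int) : coprimez r s -> ~ (3 %| u_of r s)%Z.
Proof.
move=> crs /dvdzP[t et].
have [[a ea] [b eb]] := dvd3_sum_sqr (etrans et (mulrC t 3)).
by have := coprimez_common_factor crs ea eb.
Qed.

Lemma not_dvd3_v (r s : int) : coprimez r s -> ~ (3 %| v_of r s)%Z.
Proof.
move=> crs d3; apply: (not_dvd3_u crs).
have -> : u_of r s = 3 * r ^+ 2 - v_of r s by rewrite -(u_add_v r s); ring.
by apply: rpredB; rewrite ?dvdz_mulr.
Qed.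

Lemma v_neq0 (r s : int) : coprimez r s -> v_of r s != 0.
Proof. by move=> crs; apply: contra_not_neq (not_dvd3_v crs) => ->; rewrite dvdz0. Qed.

(* A common divisor of two of u, v and u - v divides both 3 r^2 and 3 s^2,
   hence divides 3; it is a unit since 3 divides neither u nor v. *)
Lemma coprime_u_w (r s : int) : coprimez r s -> coprimez (u_of r s) (v_of s r).
Proof.
move=> crs; apply: coprimez_by_dvd => g gu gw.
have g3 : (g %| 3)%Z.
  apply: (dvdz_coprime_multiples (coprimezXl 2 (coprimezXr 2 crs))).
  - have -> : 3 * r ^+ 2 = 2 * u_of r s - v_of s r by rewrite /u_of /v_of; ring.
    by apply: rpredB; rewrite ?dvdz_mull.
  - have -> : 3 * s ^+ 2 = u_of r s + v_of s r by rewrite /u_of /v_of; ring.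
    exact: rpredD.
case: (dvdz3_cases g3) => // /dvdz_trans /(_ gu) /(not_dvd3_u crs) [].
Qed.

Lemma coprime_v_w (r s : int) : coprimez r s -> coprimez (v_of r s) (v_of s r).
Proof.
move=> crs; apply: coprimez_by_dvd => g gv gw.
have g3 : (g %| 3)%Z.
  apply: (dvdz_coprime_multiples (coprimezXl 2 (coprimezXr 2 crs))).
  - have -> : 3 * r ^+ 2 = 2 * v_of r s + v_of s r by rewrite /v_of; ring.
    by apply: rpredD; rewrite ?dvdz_mull.
  - have -> : 3 * s ^+ 2 = v_of r s + 2 * v_of s r by rewrite /v_of; ring.
    by apply: rpredD; rewrite ?dvdz_mull.
case: (dvdz3_cases g3) => // /dvdz_trans /(_ gv) /(not_dvd3_v crs) [].
Qed.

Lemma coprimez_signed_sqr (x y e : int) :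
  e ^+ 2 = 1 -> coprimez x y -> int_square (e * (x * y)) ->
  exists a b : int, (x = a ^+ 2 \/ x = - a ^+ 2) /\ (y = b ^+ 2 \/ y = - b ^+ 2).
Proof.
move=> e2 cxy [k ek].
have e1 : `|e| = 1 by apply/eqP; rewrite -sqr_norm_eq1 e2.
have exy : `|x| * `|y| = k ^+ 2.
  by rewrite -normrM -[LHS]mul1r -e1 -normrM ek ger0_norm ?sqr_ge0.
have cxy' : coprimez `|x| `|y| by rewrite -!abszE coprimezE !absz_id.
have [a [b [_ _ ea eb]]] := coprimez_mul_sqr cxy' (normr_ge0 x) (normr_ge0 y) exy.
have signed (z c : int) : `|z| = c ^+ 2 -> z = c ^+ 2 \/ z = - c ^+ 2.
  by move=> <-; case: (lerP 0 z) => hz; [left; rewrite ger0_norm | right; rewrite ltr0_norm ?opprK].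
by exists a, b; split; apply: signed.
Qed.

(* If +-u (u - v) is a square then s = 0: apart from a contradiction modulo 3,
   this gives the system of the first descent. *)
Lemma square_u_w (r s e : int) :
  coprimez r s -> r != 0 -> e ^+ 2 = 1 -> int_square (e * (u_of r s * v_of s r)) -> s = 0.
Proof.
move=> crs r0 e2 h; have u0 := u_gt0 s r0.
have [a [b [[ea|ea] [eb|eb]]]] := coprimez_signed_sqr e2 (coprime_u_w crs) h.
- case: (not_dvd3_u crs); rewrite ea; apply: (@dvd3_sqr_of_sum _ b (s ^+ 2)).
  by rewrite -ea -eb /u_of /v_of; ring.
- apply: (sum_diff2_sqr crs (a := a) (b := b)); first by rewrite -ea.
  by rewrite -[b ^+ 2]opprK -eb /v_of; ring.
- by move: u0; rewrite ea oppr_gt0 ltNge sqr_ge0.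
- by move: u0; rewrite ea oppr_gt0 ltNge sqr_ge0.
Qed.

(* If +-v (u - v) is a square then r^2 = s^2: equal signs give the system of
   the second descent (both negative is impossible as v + (u - v) = u >= 0),
   opposite signs a contradiction modulo 3. *)
Lemma square_v_w (r s e : int) :
  coprimez r s -> e ^+ 2 = 1 -> int_square (e * (v_of r s * v_of s r)) -> r ^+ 2 = s ^+ 2.
Proof.
move=> crs e2 h.
have [a [b [[ea|ea] [eb|eb]]]] := coprimez_signed_sqr e2 (coprime_v_w crs) h.
- by apply: (double_diff_sqr crs (a := a) (b := b)); rewrite -?ea -?eb.
- case: (not_dvd3_v crs); rewrite ea; apply: (@dvd3_sqr_of_sum _ b (r ^+ 2 - s ^+ 2)).
  by rewrite -ea -[b ^+ 2]opprK -eb /v_of; ring.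
- case: (not_dvd3_v crs); rewrite ea rpredN; apply: (@dvd3_sqr_of_sum _ b (s ^+ 2 - r ^+ 2)).
  by rewrite -[a ^+ 2]opprK -ea -eb /v_of; ring.
- have := v_neq0 crs; rewrite ea oppr_eq0 => a0.
  have {a0} a0 : 0 < a ^+ 2 by rewrite lt0r a0 sqr_ge0.
  have : v_of r s + v_of s r = r ^+ 2 + s ^+ 2 by rewrite /v_of; ring.
  rewrite ea eb; have := sqr_ge0 r; have := sqr_ge0 s; have := sqr_ge0 b.
  by move: a0; clear; lia.
Qed.

(* Every element of S is +-d m with {d, d'} = {u, v}
   and {m, m'} = {u + v, u - v}, and A = (d d') (m m'). *)
Lemma square_class_reduction (u v x y : int) :
  x \in [:: u * (u + v); - (u * (u + v)); u * (u - v); - (u * (u - v));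
           v * (u + v); - (v * (u + v)); v * (u - v); - (v * (u - v))] ->
  y \in [:: 1; -1; u * v * (u ^+ 2 - v ^+ 2); - (u * v * (u ^+ 2 - v ^+ 2))] ->
  x != 0 -> int_square (x * y) ->
  exists e d m : int, [/\ e ^+ 2 = 1, d = u \/ d = v, m = u + v \/ m = u - v &
    int_square (e * (d * m))].
Proof.
move=> xS yT x0 sq.
have [sx [d [d' [m [m' [sx2 dd' mm' ex]]]]]] : exists sx d d' m m' : int,
    [/\ sx ^+ 2 = 1, (d, d') = (u, v) \/ (d, d') = (v, u),
        (m, m') = (u + v, u - v) \/ (m, m') = (u - v, u + v) & x = sx * (d * m)].
  move: xS; rewrite !inE => /orP[|/orP[|/orP[|/orP[|/orP[|/orP[|/orP[|]]]]]]] /eqP->;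
  [ exists 1, u, v, (u + v), (u - v) | exists (-1), u, v, (u + v), (u - v)
  | exists 1, u, v, (u - v), (u + v) | exists (-1), u, v, (u - v), (u + v)
  | exists 1, v, u, (u + v), (u - v) | exists (-1), v, u, (u + v), (u - v)
  | exists 1, v, u, (u - v), (u + v) | exists (-1), v, u, (u - v), (u + v) ];
  by split; by [ring | left | right].
have [sy [sy2 ey]] : exists sy : int,
    sy ^+ 2 = 1 /\ (y = sy \/ y = sy * (u * v * (u ^+ 2 - v ^+ 2))).
  move: yT; rewrite !inE => /orP[|/orP[|/orP[|]]] /eqP->;
  [exists 1 | exists (-1) | exists 1 | exists (-1)]; split; by [ring | left; ring | right; ring].
have e2 : (sx * sy) ^+ 2 = 1 by rewrite exprMn sx2 sy2 mulr1.
have [hd hd'] : (d = u \/ d = v) /\ (d' = u \/ d' = v).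
  by case: dd' => -[-> ->]; split; by [left | right].
have [hm hm'] : (m = u + v \/ m = u - v) /\ (m' = u + v \/ m' = u - v).
  by case: mm' => -[-> ->]; split; by [left | right].
case: ey => ey.
- exists (sx * sy), d, m; split => //.
  by have -> : sx * sy * (d * m) = x * y by rewrite ex ey; ring.
- exists (sx * sy), d', m'; split => //.
  have dm0 : d * m != 0 by apply: contra_neq x0 => dm; rewrite ex dm mulr0.
  apply: (int_square_cancel dm0).
  have eA : u * v * (u ^+ 2 - v ^+ 2) = (d * d') * (m * m').
    by case: dd' => -[-> ->]; case: mm' => -[-> ->]; ring.
  by have -> : (d * m) ^+ 2 * (sx * sy * (d' * m')) = x * y by rewrite ex ey eA; ring.
Qed.

Lemma not_square_3r2 (r s e n : int) :
  coprimez r s -> r != 0 -> e ^+ 2 = 1 -> n = u_of r s \/ n = v_of r s ->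
  ~ int_square (e * (n * (3 * r ^+ 2))).
Proof.
move=> crs r0 e2 hn sq.
have /(dvd3_of_square_3 e2) : int_square (e * (3 * n)).
  apply: (int_square_cancel r0).
  by have -> : r ^+ 2 * (e * (3 * n)) = e * (n * (3 * r ^+ 2)) by ring.
by case: hn => ->; [apply: not_dvd3_u | apply: not_dvd3_v].
Qed.

Definition degenerate_pairs : seq (int * int) :=
  [:: (1, 0); (-1, 0); (1, 1); (1, -1); (-1, 1); (-1, -1)].

Lemma mem_degenerate_pairs (r s : int) :
  coprimez r s -> s = 0 \/ r ^+ 2 = s ^+ 2 -> (r, s) \in degenerate_pairs.
Proof.
have unit_cases (z : int) : `|z|%N = 1%N -> z = 1 \/ z = -1 by lia.
move=> crs [s0|rs].
  have : `|r|%N = 1%N by move: crs; rewrite s0 /coprimez gcdz0 => /eqP[].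
  by case/unit_cases => ->; rewrite s0.
have r1 : `|r|%N = 1%N.
  apply: (coprimez_dvd_unit crs (dvdzz r)).
  by case: (sqr_eq_cases rs) => ->; rewrite dvdzE ?abszN dvdnn.
have /unit_cases s1 : `|s|%N = 1%N.
  by apply/eqP; rewrite -(@eqn_exp2r _ _ 2) // -!abszX -rs abszX r1.
by have [->|->] := unit_cases r r1; case: s1 => ->.
Qed.

Theorem lemma6p3 :
  exists L : seq (int * int),
    forall r s : int, coprimez r s -> r != 0 ->
      (r, s) \notin L -> ~ exceptional r s.
Proof.
exists degenerate_pairs => r s crs r0 /negP notL [x xS [y yT cl]].
have [x0 sq] := same_sq_class_int cl.
have [e [d [m [e2 hd hm sq']]]] := square_class_reduction xS yT x0 sq.
apply/notL/(mem_degenerate_pairs crs).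
case: hm => m_eq; rewrite m_eq ?u_add_v ?u_sub_v in sq'.
  by case: (not_square_3r2 crs r0 e2 hd sq').
case: hd => d_eq; rewrite d_eq in sq'.
- by left; apply: (square_u_w crs r0 e2 sq').
- by right; apply: (square_v_w crs e2 sq').
Qed.
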